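(* Let $\epsilon\ge 0$, let $\psi=\frac{1+\epsilon+\sqrt{\epsilon^2+6\epsilon+5}}{2}$ and $z=\lfloor\psi\rfloor$. For every unweighted congestion game $\mathcal{G}$ with affine latency functions, $\epsilon\text{-PoA}(\mathcal{G})\le\frac{(1+\epsilon)(z^2+3z+1)}{2z-\epsilon}$.
   Context: A weighted congestion game consists of a finite set $[n]=\{1,\dots,n\}$ of players, a finite set $E$ of resources, for each player $i$ a weight $w_i>0$ and a nonempty finite strategy set $\Sigma_i\subseteq 2^E$, and for each resource $e$ a latency function $\ell_e:\mathbb{R}_{\ge 0}\to\mathbb{R}_{\ge 0}$. It is unweighted if $w_i=1$ for all $i$. Affine latency functions means $\ell_e(x)=\alpha_e x+\beta_e$ with $\alpha_e,\beta_e\ge 0$. For a strategy profile $S=(s_1,\dots,s_n)\in\prod_i\Sigma_i$, the congestion of $e$ is $L_e(S)=\sum_{i:\,e\in s_i}w_i$, the cost of player $i$ is $c_i(S)=\sum_{e\in s_i}\ell_e(L_e(S))$, and the social cost is $\mathrm{SUM}(S)=\sum_{i\in[n]}c_i(S)$; $S^*$ denotes a profile minimizing $\mathrm{SUM}$. For $t\in\Sigma_i$, $(S_{-i}\diamond t)$ denotes the profile obtained from $S$ by replacing $s_i$ with $t$. For $\epsilon\ge 0$, $S$ is an $\epsilon$-approximate pure Nash equilibrium ($\epsilon$-PNE) if $c_i(S)\le(1+\epsilon)c_i(S_{-i}\diamond t)$ for all $i\in[n]$ and all $t\in\Sigma_i$. The $\epsilon$-approximate price of anarchy is $\epsilon\text{-PoA}(\mathcal{G})=\max_{S\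 \epsilon\text{-PNE}}\mathrm{SUM}(S)/\mathrm{SUM}(S^* )$. *)

From HB Require Import structures.
From mathcomp Require Import all_boot.
From Stdlib Require Import Reals.

Set Implicit Arguments.
Unset Strict Implicit.
Unset Printing Implicit Defensive.

Local Open Scope R_scope.

Definition profile (n : nat) (E : finType) := 'I_n -> {set E}.

Definition feasible n (E : finType) (Sigma : 'I_n -> {set {set E}})
  (S : profile n E) : Prop := forall i, S i \in Sigma i.

Definition deviate n (E : finType) (S : profile n E) (i : 'I_n) (t : {set E})
  : profile n E := fun j => if j == i then t else S j.

Definition load n (E : finType) (S : profile n E) (e : E) : R :=
  INR #|[set i : 'I_n | e \in S i]|.

Definition latency (E : finType) (alpha beta : E -> R) (e : E) (x : R) : R :=
  alpha e * x + beta e.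

Definition cost n (E : finType) (alpha beta : E -> R) (S : profile n E)
  (i : 'I_n) : R :=
  \big[Rplus/0]_(e in S i) latency alpha beta e (load S e).

Definition social_cost n (E : finType) (alpha beta : E -> R) (S : profile n E)
  : R := \big[Rplus/0]_(i < n) cost alpha beta S i.

Definition eps_PNE (eps : R) n (E : finType) (Sigma : 'I_n -> {set {set E}})
  (alpha beta : E -> R) (S : profile n E) : Prop :=
  feasible Sigma S /\
  forall (i : 'I_n) (t : {set E}), t \in Sigma i ->
    cost alpha beta S i <= (1 + eps) * cost alpha beta (deviate S i t) i.

Definition optimal n (E : finType) (Sigma : 'I_n -> {set {set E}})
  (alpha beta : E -> R) (S : profile n E) : Prop :=
  feasible Sigma S /\
  forall T : profile n E, feasible Sigma T ->
    social_cost alpha beta S <= social_cost alpha beta T.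

Definition psi (eps : R) : R := (1 + eps + sqrt (eps ^ 2 + 6 * eps + 5)) / 2.

(* z = floor(psi); Int_part x is the floor of x (IZR (Int_part x) <= x < IZR (Int_part x) + 1). *)
Definition zfloor (eps : R) : R := IZR (Int_part (psi eps)).

Definition poa_bound (eps : R) : R :=
  let z := zfloor eps in (1 + eps) * (z ^ 2 + 3 * z + 1) / (2 * z - eps).

From HB Require Import structures.
From mathcomp Require Import all_boot.
From Stdlib Require Import Reals Lra Lia Psatz.

(* Write x_e = L_e(S) for an eps-PNE S, y_e = L_e(T) for any feasible
   profile T (e.g. an optimum), and l_e(x) = alpha_e x + beta_e.
   1. Counting by resources: SUM(S) = sum_e x_e l_e(x_e).
   2. Letting every player i deviate to T i, a deviation raises the load
      of each resource by at most one, so the eps-PNE conditions sum to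
      SUM(S) <= (1 + eps) P  with  P = sum_e y_e l_e(x_e + 1).
   3. For naturals x, y and an integer z >= 0,
      (2z+1)(x+1) y <= x^2 + (z^2+3z+1) y^2   (the case y = 1 is
      (x-z)(x-z-1) >= 0, which needs integrality), hence resource-wise
      (2z+1) P <= SUM(S) + (z^2+3z+1) SUM(T).
   4. Combining 2 and 3: (2z - eps) SUM(S) <= (1+eps)(z^2+3z+1) SUM(T),
      which gives the bound for every integer z >= 0 with 2z > eps.
   The theorem is the instance z = floor(psi), for which 2z > eps. *)

Set Implicit Arguments.
Unset Strict Implicit.

Local Open Scope R_scope.

Lemma Rplus_law_assoc : associative Rplus.
Proof. by move=> x y z; rewrite Rplus_assoc. Qed.
Lemma Rplus_law_comm : commutative Rplus.
Proof. by move=> x y; rewrite Rplus_comm. Qed.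
Lemma Rplus_law_id : left_id 0 Rplus.
Proof. by move=> x; rewrite Rplus_0_l. Qed.

HB.instance Definition _ :=
  Monoid.isComLaw.Build R 0 Rplus Rplus_law_assoc Rplus_law_comm Rplus_law_id.

Lemma iter_Rplus (k : nat) (x : R) : ssrnat.iter k (Rplus x) 0 = INR k * x.
Proof.
elim: k => [|k IH]; first by rewrite /=; lra.
by rewrite S_INR /= IH; lra.
Qed.

Lemma sum_scale (I : finType) (P : pred I) (F : I -> R) (c : R) :
  c * \big[Rplus/0]_(i | P i) F i = \big[Rplus/0]_(i | P i) (c * F i).
Proof. by apply: (big_endo (fun x => c * x)) => [x y|]; lra. Qed.

Lemma sum_le (I : finType) (P : pred I) (F G : I -> R) :
  (forall i, P i -> F i <= G i) ->
  \big[Rplus/0]_(i | P i) F i <= \big[Rplus/0]_(i | P i) G i.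
Proof.
move=> FG; apply: (big_ind2 Rle) => //; first lra.
by move=> a b c d; lra.
Qed.

Lemma sum_lin (I : finType) (F G : I -> R) (b : R) :
  \big[Rplus/0]_(i : I) (F i + b * G i)
  = \big[Rplus/0]_(i : I) F i + b * \big[Rplus/0]_(i : I) G i.
Proof. by rewrite big_split /= sum_scale. Qed.

(* Double counting: summing a resource weight over the strategies of all
   players counts each resource once per player using it. *)
Lemma sum_by_resource n (E : finType) (T : profile n E) (g : E -> R) :
  \big[Rplus/0]_(i < n) \big[Rplus/0]_(e in T i) g e
  = \big[Rplus/0]_(e : E) (load T e * g e).
Proof.
transitivity (\big[Rplus/0]_(i < n) \big[Rplus/0]_(e : E)
                 (if e \in T i then g e else 0)).
  by apply: eq_bigr => i _; rewrite big_mkcond.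
rewrite exchange_big /=; apply: eq_bigr => e _.
rewrite -big_mkcond /= (eq_bigl (fun i => i \in [set j : 'I_n | e \in T j])); last first.
  by move=> i; rewrite inE.
by rewrite big_const iter_Rplus.
Qed.

Lemma social_cost_by_resource n (E : finType) (alpha beta : E -> R)
  (T : profile n E) :
  social_cost alpha beta T
  = \big[Rplus/0]_(e : E) (load T e * latency alpha beta e (load T e)).
Proof. exact: sum_by_resource. Qed.

Lemma load_deviate_le n (E : finType) (S : profile n E) (i : 'I_n)
  (t : {set E}) (e : E) :
  load (deviate S i t) e <= load S e + 1.
Proof.
rewrite /load -S_INR; apply/le_INR/leP.
apply: (@leq_trans #|i |: [set j | e \in S j]|); last first.
  by rewrite cardsU1 -add1n leq_add2r leq_b1.
apply: subset_leq_card; apply/subsetP => j; rewrite !inE /deviate.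
by case: eqP => // _ ->; rewrite orbT.
Qed.

Lemma cost_deviate_le n (E : finType) (alpha beta : E -> R)
  (halpha : forall e, 0 <= alpha e) (S : profile n E) (i : 'I_n)
  (t : {set E}) :
  cost alpha beta (deviate S i t) i
  <= \big[Rplus/0]_(e in t) latency alpha beta e (load S e + 1).
Proof.
rewrite /cost {1}/deviate eqxx; apply: sum_le => e _; rewrite /latency.
by apply: Rplus_le_compat_r; apply: Rmult_le_compat_l => //;
  apply: load_deviate_le.
Qed.

(* Summing the eps-PNE conditions for the deviations of every player to
   its strategy in a feasible profile T. *)
Lemma eps_PNE_smooth_bound (eps : R) (heps : 0 <= eps) n (E : finType)
  (Sigma : 'I_n -> {set {set E}}) (alpha beta : E -> R)
  (halpha : forall e, 0 <= alpha e) (S T : profile n E) :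
  eps_PNE eps Sigma alpha beta S -> feasible Sigma T ->
  social_cost alpha beta S
  <= (1 + eps) * \big[Rplus/0]_(e : E)
                   (load T e * latency alpha beta e (load S e + 1)).
Proof.
move=> [_ hNE] hT; rewrite -sum_by_resource sum_scale.
apply: sum_le => i _; apply: Rle_trans (hNE i (T i) (hT i)) _.
by apply: Rmult_le_compat_l; [lra | apply: cost_deviate_le].
Qed.

Lemma consecutive_product_ge0 (m : Z) : 0 <= IZR m * (IZR m - 1).
Proof.
have [h|h] : (m <= 0)%Z \/ (1 <= m)%Z by lia.
- by move/IZR_le: h; nra.
- by move/IZR_le: h; nra.
Qed.

Lemma key_inequality (a b : nat) (k : Z) :
  0 <= IZR k ->
  (2 * IZR k + 1) * (INR a + 1) * INR b
  <= INR a ^ 2 + (IZR k ^ 2 + 3 * IZR k + 1) * INR b ^ 2.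
Proof.
move=> hz; set z := IZR k in hz *; set x := INR a.
have hx : 0 <= x by apply: pos_INR.
case: b => [|[|b]]; first by rewrite /=; nra.
- have := consecutive_product_ge0 (Z.of_nat a - k).
  by rewrite minus_IZR -INR_IZR_INZ -/x -/z /=; nra.
- have hy : 2 <= INR b.+2 by rewrite !S_INR; have := pos_INR b; lra.
  set y := INR b.+2 in hy *.
  have square_ge0 : 0 <= (x - (2 * z + 1) * y / 2) ^ 2 by apply: pow2_ge_0.
  have hzy : 0 <= z * (y - 2) by apply: Rmult_le_pos; lra.
  have rest_ge0 : 0 <= y * ((2 * z + 3 / 4) * y - (2 * z + 1)).
    by apply: Rmult_le_pos; lra.
  nra.
Qed.

Lemma resource_inequality (a b : nat) (k : Z) (al be : R) :
  0 <= IZR k -> 0 <= al -> 0 <= be ->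
  (2 * IZR k + 1) * (INR b * (al * (INR a + 1) + be))
  <= INR a * (al * INR a + be)
     + (IZR k ^ 2 + 3 * IZR k + 1) * (INR b * (al * INR b + be)).
Proof.
move=> hz hal hbe.
have hkey := key_inequality a b hz.
have hx := pos_INR a; have hy := pos_INR b.
have linear_part : 0 <= be * (INR a + (IZR k ^ 2 + IZR k) * INR b).
  by apply: Rmult_le_pos => //; nra.
have quadratic_part : 0 <= al * (INR a ^ 2
   + (IZR k ^ 2 + 3 * IZR k + 1) * INR b ^ 2
   - (2 * IZR k + 1) * (INR a + 1) * INR b).
  by apply: Rmult_le_pos => //; lra.
nra.
Qed.

Lemma summed_resource_inequality n (E : finType) (alpha beta : E -> R)
  (halpha : forall e, 0 <= alpha e) (hbeta : forall e, 0 <= beta e)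
  (k : Z) (hk : 0 <= IZR k) (S T : profile n E) :
  (2 * IZR k + 1) * \big[Rplus/0]_(e : E)
                      (load T e * latency alpha beta e (load S e + 1))
  <= social_cost alpha beta S
     + (IZR k ^ 2 + 3 * IZR k + 1) * social_cost alpha beta T.
Proof.
rewrite !social_cost_by_resource -sum_lin sum_scale; apply: sum_le => e _.
exact: resource_inequality.
Qed.

Theorem eps_PoA_bound_integer (eps : R) (heps : 0 <= eps) (k : Z)
  (hk : 0 <= IZR k) (hkeps : eps < 2 * IZR k)
  n (E : finType) (Sigma : 'I_n -> {set {set E}}) (alpha beta : E -> R)
  (halpha : forall e, 0 <= alpha e) (hbeta : forall e, 0 <= beta e)
  (S T : profile n E) :
  eps_PNE eps Sigma alpha beta S -> feasible Sigma T ->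
  social_cost alpha beta S
  <= (1 + eps) * (IZR k ^ 2 + 3 * IZR k + 1) / (2 * IZR k - eps)
     * social_cost alpha beta T.
Proof.
move=> hS hT.
have hsmooth := eps_PNE_smooth_bound heps halpha hS hT.
have hres := summed_resource_inequality halpha hbeta hk S T.
set Q := social_cost alpha beta S in hsmooth hres *.
set O := social_cost alpha beta T in hres *.
set P := \big[Rplus/0]_(e : E) _ in hsmooth hres.
have hQ : (2 * IZR k - eps) * Q
          <= (1 + eps) * (IZR k ^ 2 + 3 * IZR k + 1) * O by nra.
apply: (Rmult_le_reg_l (2 * IZR k - eps)); first lra.
by rewrite -Rmult_assoc Rmult_div_assoc Rmult_div_r //; lra.
Qed.

(* floor(psi) >= 0 and 2 floor(psi) > eps, since psi >= eps + 3/2. *)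
Lemma zfloor_facts (eps : R) :
  0 <= eps -> 0 <= zfloor eps /\ eps < 2 * zfloor eps.
Proof.
move=> he.
have hs : eps + 2 <= sqrt (eps ^ 2 + 6 * eps + 5).
  rewrite -{1}(sqrt_pow2 (eps + 2)); last lra.
  by apply: sqrt_le_1_alt; nra.
have [_ hfloor] := base_Int_part (psi eps).
by rewrite /zfloor; move: hfloor; rewrite /psi; lra.
Qed.

Theorem mainTheorem2 (eps : R) (heps : 0 <= eps)
  (n : nat) (E : finType) (Sigma : 'I_n -> {set {set E}})
  (hSigma : forall i : 'I_n, Sigma i != set0)
  (alpha beta : E -> R)
  (halpha : forall e, 0 <= alpha e) (hbeta : forall e, 0 <= beta e)
  (S Sopt : profile n E)
  (hS : eps_PNE eps Sigma alpha beta S)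
  (hopt : optimal Sigma alpha beta Sopt) :
  social_cost alpha beta S <= poa_bound eps * social_cost alpha beta Sopt.
Proof.
have [hz hzeps] := zfloor_facts heps.
exact: (eps_PoA_bound_integer heps hz hzeps halpha hbeta hS hopt.1).
Qed.
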